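(* A vertex of a monotonous quiver is phylogenetic if and only if it is normal and has finite height.
   Context: A quiver consists of a class of vertices and, for each ordered pair of vertices $(A,B)$, a set of edges $A\to B$ (loops and multiple edges allowed). An evolution of length $m\ge 0$ is a sequence $A_0\leftarrow A_1\leftarrow\cdots\leftarrow A_m$ of vertices together with edges $A_k\to A_{k-1}$ ($1\le k\le m$); $A_0$ is its initial and $A_m$ its terminal vertex. Write $A\le B$ ($A$ is an ancestor of $B$) if there is an evolution with initial vertex $A$ and terminal vertex $B$; $A,B$ are isotypic ($A\sim B$) if $A\le B$ and $B\le A$. A vertex $A$ is primitive if every ancestor of $A$ is isotypic to $A$. A full evolution for $X$ is an evolution with primitive initial vertex and terminal vertex $X$. The height $h(X)$ is the smallest length of a full evolution for $X$ ($\infty$ if none). A vertex $A_k$ ($0\le k<m$) of an evolution $A_0\leftarrow\cdots\leftarrow A_m$ is critical if $h(A_k)<\infty$ and $h(A_{k+1})=h(A_k)+1$. The critical ancestors of a vertex $B$ are the critical vertices of full evolutions terminating at $B$. $B$ is normal if any two critical ancestors of $B$ of equal height are isotypic. An evolution $\alpha=(A_0\leftarrow\cdots\leftarrow A_m)$ embeds in $\beta=(B_0\leftarrow\cdots\leftarrow B_n)$ if $m\le n$ and there are $0\le r_0<\cdots<r_m\le n$ with $A_k\sim B_{r_k}$. A universal evolution for $X$ is a full evolution for $X$ embedding in every full evolution for $X$; $X$ is phylogenetic if one exists. A quiver is monotonous if $h(A)\ge h(B)$ for every edge $A\to B$. *)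

(* A quiver: a type V of vertices and, for each ordered pair
   (A,B), a type E A B of edges A -> B (loops / multiple edges allowed). *)
From Stdlib Require Import Arith.

Section Quiver.
Context {V : Type} (E : V -> V -> Type).

(* An evolution of length m is given by its vertex sequence A_0,...,A_m
   (a function A : nat -> V, only values at 0..m matter) together with
   edges A_k -> A_{k-1} for 1 <= k <= m. *)
Definition is_evol (m : nat) (A : nat -> V) : Prop :=
  forall k, 1 <= k <= m -> inhabited (E (A k) (A (k - 1))).

Definition ancestor (A B : V) : Prop :=
  exists m Af, is_evol m Af /\ Af 0 = A /\ Af m = B.

Definition isotypic (A B : V) : Prop := ancestor A B /\ ancestor B A.

Definition primitive (A : V) : Prop := forall B, ancestor B A -> isotypic B A.

Definition full_evol (m : nat) (Af : nat -> V) (X : V) : Prop :=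
  is_evol m Af /\ primitive (Af 0) /\ Af m = X.

Definition has_height (X : V) (n : nat) : Prop :=
  (exists Af, full_evol n Af X) /\
  (forall m Af, full_evol m Af X -> n <= m).

Definition finite_height (X : V) : Prop := exists n, has_height X n.

Definition critical (m : nat) (Af : nat -> V) (k : nat) : Prop :=
  k < m /\ exists n, has_height (Af k) n /\ has_height (Af (S k)) (S n).

Definition critical_ancestor (C B : V) : Prop :=
  exists m Af k, full_evol m Af B /\ critical m Af k /\ Af k = C.

Definition normal (B : V) : Prop :=
  forall C D n, critical_ancestor C B -> critical_ancestor D B ->
    has_height C n -> has_height D n -> isotypic C D.

Definition embeds (m : nat) (Af : nat -> V) (n : nat) (Bf : nat -> V) : Prop :=
  m <= n /\ exists r : nat -> nat,
    (forall k, k < m -> r k < r (S k)) /\ r m <= n /\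
    (forall k, k <= m -> isotypic (Af k) (Bf (r k))).

Definition universal_evol (m : nat) (Af : nat -> V) (X : V) : Prop :=
  full_evol m Af X /\ forall n Bf, full_evol n Bf X -> embeds m Af n Bf.

Definition phylogenetic (X : V) : Prop := exists m Af, universal_evol m Af X.

(* monotonous: h(A) >= h(B) for every edge A -> B (with h = infinity allowed) *)
Definition monotonous : Prop :=
  forall A B (e : E A B) nA, has_height A nA ->
    exists nB, has_height B nB /\ nB <= nA.

End Quiver.

(* In a monotonous quiver heights never decrease along an evolution and grow
   by at most one per edge, so a full evolution of X crosses every level
   j < h(X) at a critical vertex (heights j, j+1).  If X is normal, the
   critical vertices of a shortest full evolution U of X are, level by level,
   isotypic to crossing vertices of any other full evolution, which embeds U.
   Conversely, if a universal evolution U embeds a full evolution B through a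
   critical vertex B_t of height j, heights force the embedding to send the
   level-j vertex of U to B_t; so all critical ancestors of height j are
   isotypic to that vertex of U. *)
From Stdlib Require Import Arith Lia Classical ClassicalEpsilon.

Section Evolutions.
Variables (V : Type) (E : V -> V -> Type).

Lemma is_evol_prefix m i A : is_evol E m A -> i <= m -> is_evol E i A.
Proof. intros HA Hi k Hk; apply HA; lia. Qed.

Lemma is_evol_shift m t A :
  is_evol E m A -> t <= m -> is_evol E (m - t) (fun i => A (t + i)).
Proof.
  intros HA Ht k Hk.
  replace (t + (k - 1)) with (t + k - 1) by lia.
  apply HA; lia.
Qed.

Definition evol_cat (a : nat) (A B : nat -> V) : nat -> V :=
  fun i => if i <=? a then A i else B (i - a).

Lemma evol_cat_left a A B i : i <= a -> evol_cat a A B i = A i.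
Proof. intros Hi; unfold evol_cat; apply Nat.leb_le in Hi; now rewrite Hi. Qed.

Lemma evol_cat_right a A B i : A a = B 0 -> evol_cat a A B (a + i) = B i.
Proof.
  intros Hab; unfold evol_cat.
  destruct (a + i <=? a) eqn:Hle.
  - apply Nat.leb_le in Hle. replace i with 0 by lia. now rewrite Nat.add_0_r.
  - f_equal; lia.
Qed.

Lemma is_evol_cat a b A B :
  is_evol E a A -> is_evol E b B -> A a = B 0 -> is_evol E (a + b) (evol_cat a A B).
Proof.
  intros HA HB Hab k Hk.
  destruct (le_lt_dec k a) as [Hka | Hka].
  - rewrite !evol_cat_left by lia. apply HA; lia.
  - replace k with (a + (k - a)) by lia.
    replace (a + (k - a) - 1) with (a + (k - a - 1)) by lia.
    rewrite !evol_cat_right by assumption.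
    apply HB; lia.
Qed.

Lemma full_evol_cat a l A F Y X :
  full_evol E a A Y -> is_evol E l F -> F 0 = Y -> F l = X ->
  full_evol E (a + l) (evol_cat a A F) X.
Proof.
  intros [HA [Hp HY]] HF HF0 HFl.
  assert (Hjoin : A a = F 0) by congruence.
  split; [now apply is_evol_cat | split].
  - now rewrite evol_cat_left by lia.
  - now rewrite evol_cat_right.
Qed.

Lemma full_evol_prefix m i A X :
  full_evol E m A X -> i <= m -> full_evol E i A (A i).
Proof. intros [HA [Hp _]] Hi; split; [eapply is_evol_prefix; eauto | auto]. Qed.

Lemma ancestor_refl A : ancestor E A A.
Proof. exists 0, (fun _ => A); split; [intros k Hk; lia | auto]. Qed.

Lemma ancestor_trans A B C : ancestor E A B -> ancestor E B C -> ancestor E A C.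
Proof.
  intros [a [F [HF [HF0 HFa]]]] [b [G [HG [HG0 HGb]]]].
  exists (a + b), (evol_cat a F G).
  split; [apply is_evol_cat; auto; congruence | split].
  - now rewrite evol_cat_left by lia.
  - rewrite evol_cat_right; congruence.
Qed.

Lemma isotypic_sym A B : isotypic E A B -> isotypic E B A.
Proof. intros [? ?]; now split. Qed.

Lemma isotypic_trans A B C : isotypic E A B -> isotypic E B C -> isotypic E A C.
Proof. intros [? ?] [? ?]; split; eapply ancestor_trans; eauto. Qed.

Lemma ancestor_evol m A k l : is_evol E m A -> k <= l <= m -> ancestor E (A k) (A l).
Proof.
  intros HA Hkl. exists (l - k), (fun i => A (k + i)).
  split; [eapply is_evol_prefix; [apply (is_evol_shift m) |]; auto; lia |].
  split; f_equal; lia.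
Qed.

Lemma has_height_unique X a b : has_height E X a -> has_height E X b -> a = b.
Proof.
  intros [[A HA] Ha] [[B HB] Hb].
  apply Nat.le_antisymm; [eapply Ha | eapply Hb]; eauto.
Qed.

Lemma primitive_has_height0 A : primitive E A -> has_height E A 0.
Proof.
  intros Hp; split; [| intros; lia].
  exists (fun _ => A); split; [intros k Hk; lia | auto].
Qed.

Lemma full_evol_finite_height m A X : full_evol E m A X -> finite_height E X.
Proof.
  intros HA.
  destruct (dec_inh_nat_subset_has_unique_least_element
              (fun n => exists B, full_evol E n B X)) as [n [[Hn Hleast] _]].
  - intros n; apply classic.
  - eauto.
  - exists n; split; [exact Hn |]. intros m' B HB; apply Hleast; eauto.
Qed.

Lemma has_height_le_add l F a b :
  is_evol E l F -> has_height E (F 0) a -> has_height E (F l) b -> b <= a + l.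
Proof.
  intros HF [[A HA] _] [_ Hb].
  eapply Hb, full_evol_cat; eauto.
Qed.

Lemma evol_has_height_le_add m B k l a b :
  is_evol E m B -> k <= l <= m ->
  has_height E (B k) a -> has_height E (B l) b -> b <= a + (l - k).
Proof.
  intros HB Hkl Ha Hb.
  apply (has_height_le_add (l - k) (fun i => B (k + i))).
  - eapply is_evol_prefix; [apply (is_evol_shift m) |]; auto; lia.
  - now rewrite Nat.add_0_r.
  - now replace (k + (l - k)) with l by lia.
Qed.

Lemma critical_ancestor_intro m B X t j :
  full_evol E m B X -> t < m ->
  has_height E (B t) j -> has_height E (B (S t)) (S j) -> critical_ancestor E (B t) X.
Proof. intros HB Ht Hj HSj; exists m, B, t; split; [exact HB | split; [split; eauto | auto]]. Qed.

Lemma embedding_index_le (r : nat -> nat) m k :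
  (forall i, i < m -> r i < r (S i)) -> k <= m -> r k <= r m.
Proof.
  intros Hr Hk; induction m as [| m IH].
  - now replace k with 0 by lia.
  - destruct (Nat.eq_dec k (S m)) as [-> | Hne]; [lia |].
    assert (r k <= r m) by (apply IH; [intros; apply Hr |]; lia).
    specialize (Hr m ltac:(lia)). lia.
Qed.

Section Monotonous.
Hypothesis mono : monotonous E.

Lemma evol_height_le m F b :
  is_evol E m F -> has_height E (F m) b -> exists a, has_height E (F 0) a /\ a <= b.
Proof.
  revert b; induction m as [| m IH]; intros b HF Hb; [eauto |].
  destruct (HF (S m) ltac:(lia)) as [e].
  replace (S m - 1) with m in e by lia.
  destruct (mono _ _ e b Hb) as [c [Hc Hcb]].
  destruct (IH c (is_evol_prefix (S m) m F HF ltac:(lia)) Hc) as [a [Ha Hac]].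
  exists a; split; [exact Ha | lia].
Qed.

Lemma ancestor_height A B b :
  ancestor E A B -> has_height E B b -> exists a, has_height E A a /\ a <= b.
Proof. intros [m [F [HF [<- <-]]]]; now apply evol_height_le. Qed.

Lemma isotypic_has_height A B n :
  isotypic E A B -> has_height E A n -> has_height E B n.
Proof.
  intros [HAB HBA] HA.
  destruct (ancestor_height B A n HBA HA) as [b [Hb Hbn]].
  destruct (ancestor_height A B b HAB Hb) as [a [Ha Hab]].
  rewrite (has_height_unique A a n Ha HA) in Hab.
  now replace n with b by lia.
Qed.

Lemma evol_has_height_le m B k l b :
  is_evol E m B -> k <= l <= m -> has_height E (B l) b ->
  exists a, has_height E (B k) a /\ a <= b.
Proof. intros HB Hkl; apply ancestor_height; eapply ancestor_evol; eauto. Qed.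

Lemma shortest_full_evol_height n U X i :
  full_evol E n U X -> has_height E X n -> i <= n -> has_height E (U i) i.
Proof.
  intros HU HX Hi.
  pose proof HU as [HUe [_ HUn]].
  destruct (evol_has_height_le n U i n n HUe ltac:(lia) ltac:(now rewrite HUn))
    as [a [Ha _]].
  assert (Hai : a <= i) by (apply (proj2 Ha) with U; eapply full_evol_prefix; eauto).
  assert (n <= a + (n - i))
    by (apply (evol_has_height_le_add n U i n); auto; now rewrite HUn).
  now replace a with i in Ha by lia.
Qed.

Lemma evol_height_crossing m B b a c j :
  is_evol E m B -> b <= m -> has_height E (B 0) a -> has_height E (B b) c ->
  a <= j < c ->
  exists t, t < b /\ has_height E (B t) j /\ has_height E (B (S t)) (S j).
Proof.
  intros HB; revert c; induction b as [| b IH]; intros c Hb Ha Hc Hj.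
  - rewrite (has_height_unique _ _ _ Ha Hc) in Hj; lia.
  - destruct (evol_has_height_le m B b (S b) c HB ltac:(lia) Hc) as [c' [Hc' Hcc']].
    assert (c <= c' + 1)
      by (replace 1 with (S b - b) by lia; eapply evol_has_height_le_add; eauto; lia).
    destruct (lt_dec j c') as [Hjc | Hjc].
    + destruct (IH c' ltac:(lia) Ha Hc' ltac:(lia)) as [t [Ht Hcross]].
      exists t; split; [lia | exact Hcross].
    + exists b; split; [lia |].
      replace j with c' by lia; now replace (S c') with c by lia.
Qed.

Lemma full_evol_reaches_height m B X b c j :
  full_evol E m B X -> b <= m -> has_height E (B b) c -> j <= c ->
  exists k, k <= b /\ has_height E (B k) j.
Proof.
  intros [HB [Hp _]] Hb Hc Hj.
  destruct (Nat.eq_dec j c) as [-> | Hne]; [eauto |].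
  destruct (evol_height_crossing m B b 0 c j HB Hb (primitive_has_height0 _ Hp) Hc
              ltac:(lia)) as [t [Ht [Htj _]]].
  exists t; split; [lia | exact Htj].
Qed.

Lemma critical_ancestor_height_lt C X j n :
  critical_ancestor E C X -> has_height E C j -> has_height E X n -> j < n.
Proof.
  intros [m [B [t [[HB [_ HBm]] [[Ht [j' [Hj' HSj']]] <-]]]]] Hj Hn.
  rewrite (has_height_unique _ _ _ Hj' Hj) in HSj'.
  destruct (evol_has_height_le m B (S t) m n HB ltac:(lia) ltac:(now rewrite HBm))
    as [a [Ha Han]].
  rewrite (has_height_unique _ _ _ Ha HSj') in Han; lia.
Qed.

Lemma universal_isotypic_critical mU U X C j k :
  universal_evol E mU U X -> critical_ancestor E C X -> has_height E C j ->
  k <= mU -> has_height E (U k) j -> isotypic E (U k) C.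
Proof.
  intros [_ Huniv] [m [B [t [HB [[Ht [j' [Hj' HSj']]] <-]]]]] Hj Hk HUk.
  rewrite (has_height_unique _ _ _ Hj' Hj) in HSj'.
  pose proof HB as [HBe [_ HBm]].
  pose proof Hj as [[D HD] _].
  (* G (a shortest full evolution of B t, then the tail of B) has height i at
     i <= j and heights above j further on, while G (r k) has height j. *)
  set (G := evol_cat j D (fun i => B (t + i))).
  assert (HG : full_evol E (j + (m - t)) G X).
  { apply full_evol_cat with (B t); [exact HD | apply is_evol_shift; [exact HBe | lia]
    | now rewrite Nat.add_0_r | now replace (t + (m - t)) with m by lia]. }
  destruct (Huniv _ _ HG) as [_ [r [Hr [Hrmax Hiso]]]].
  specialize (Hiso k Hk).
  pose proof (isotypic_has_height _ _ _ Hiso HUk) as HGk.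
  destruct (lt_eq_lt_dec (r k) j) as [[Hlt | Heq] | Hgt].
  - exfalso. unfold G in HGk. rewrite evol_cat_left in HGk by lia.
    pose proof (shortest_full_evol_height j D (B t) (r k) HD Hj ltac:(lia)) as HDrk.
    pose proof (has_height_unique _ _ _ HGk HDrk); lia.
  - unfold G in Hiso. rewrite Heq, evol_cat_left, (proj2 (proj2 HD)) in Hiso by lia.
    exact Hiso.
  - exfalso.
    pose proof (embedding_index_le r mU k Hr Hk).
    unfold G in HGk. replace (r k) with (j + (r k - j)) in HGk by lia.
    rewrite evol_cat_right in HGk by (rewrite (proj2 (proj2 HD)); f_equal; lia).
    destruct (evol_has_height_le m B (S t) (t + (r k - j)) j HBe ltac:(lia) HGk)
      as [a [Ha Haj]].
    rewrite (has_height_unique _ _ _ Ha HSj') in Haj; lia.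
Qed.

Lemma crossing_indices m B X n :
  full_evol E m B X -> has_height E X n ->
  exists r : nat -> nat, r n = m /\ forall k, k < n ->
    r k < m /\ has_height E (B (r k)) k /\ has_height E (B (S (r k))) (S k).
Proof.
  intros [HB [Hp HBm]] Hn.
  destruct (choice (fun k t => (k < n -> t < m /\ has_height E (B t) k /\
                                 has_height E (B (S t)) (S k)) /\ (k = n -> t = m)))
    as [r Hr].
  - intros k. destruct (lt_dec k n) as [Hk | Hk].
    + destruct (evol_height_crossing m B m 0 n k HB (le_n m) (primitive_has_height0 _ Hp)
                  ltac:(now rewrite HBm) ltac:(lia)) as [t Ht].
      exists t; split; [auto | lia].
    + exists m; split; [lia | auto].
  - exists r; split; [now apply Hr | intros k Hk; now apply Hr].
Qed.

Lemma shortest_full_evol_universal n U X :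
  normal E X -> full_evol E n U X -> has_height E X n -> universal_evol E n U X.
Proof.
  intros Hnormal HU HX. split; [exact HU |].
  intros m B HB.
  destruct (crossing_indices m B X n HB HX) as [r [Hrn Hr]].
  split; [exact (proj2 HX m B HB) | exists r; split; [| split; [lia |]]].
  - intros k Hk. destruct (Hr k Hk) as [Hrk [HBk _]].
    destruct (Nat.eq_dec (S k) n) as [<- | Hne]; [lia |].
    destruct (Hr (S k) ltac:(lia)) as [_ [HBSk _]].
    destruct (le_lt_dec (r (S k)) (r k)) as [Hle | Hlt]; [exfalso | exact Hlt].
    destruct (evol_has_height_le m B (r (S k)) (r k) k (proj1 HB) ltac:(lia) HBk)
      as [a [Ha Hak]].
    rewrite (has_height_unique _ _ _ Ha HBSk) in Hak; lia.
  - intros k Hk. destruct (Nat.eq_dec k n) as [-> | Hne].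
    + rewrite Hrn, (proj2 (proj2 HU)), (proj2 (proj2 HB)).
      split; apply ancestor_refl.
    + destruct (Hr k ltac:(lia)) as [Hrk [HBk HBSk]].
      assert (HUk : has_height E (U k) k) by (eapply shortest_full_evol_height; eauto).
      apply (Hnormal _ _ k); [| eapply critical_ancestor_intro; eauto | exact HUk | exact HBk].
      apply (critical_ancestor_intro n U X k k HU ltac:(lia) HUk).
      apply (shortest_full_evol_height n U X); auto; lia.
Qed.

End Monotonous.
End Evolutions.

Theorem theorem6p1 (V : Type) (E : V -> V -> Type) (X : V) :
  monotonous E ->
  (phylogenetic E X <-> normal E X /\ finite_height E X).
Proof.
  intros mono. split.
  - intros [mU [U HU]].
    pose proof (proj1 HU) as [_ [_ HUX]].
    destruct (full_evol_finite_height _ _ _ _ _ (proj1 HU)) as [nX HX].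
    split; [| now exists nX].
    intros C D n HC HD HCn HDn.
    pose proof (critical_ancestor_height_lt _ _ mono _ _ _ _ HC HCn HX) as Hlt.
    destruct (full_evol_reaches_height _ _ mono mU U X mU nX n (proj1 HU) (le_n mU)
                ltac:(now rewrite HUX) ltac:(lia)) as [k [Hk HUk]].
    apply isotypic_trans with (U k).
    + apply isotypic_sym; eapply universal_isotypic_critical; eauto.
    + eapply universal_isotypic_critical; eauto.
  - intros [Hnormal [n HX]].
    destruct (proj1 HX) as [U HU].
    exists n, U. now apply shortest_full_evol_universal.
Qed.
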